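(* Let $\mathfrak A$ be a countable linear ordering and $\alpha<\mathrm{FC}(\mathfrak A)$ an ordinal. Then (1) $\mathfrak A$ contains a scattered closed interval $I$ with $\mathrm{FC}(\mathfrak A\restriction I)=\alpha+1$; and (2) $\mathfrak A$ contains a scattered closed interval $I$ with $\mathrm{VD}_*(\mathfrak A\restriction I)=\alpha$.
   Context: A closed interval of $\mathfrak A$ is a set $[x,y]_{\mathfrak A}=\{z:x\le z\le y\}$ for $x\le y$. A linear ordering is scattered if $(\mathbb Q;<)$ does not embed into it. $\mathrm{FC}$-rank: a condensation is an equivalence relation whose classes are intervals, yielding the quotient ordering $\mathfrak A/{\sim}$; $\sim_0$ is equality, $x\sim_{\beta+1}y$ iff the closed interval between the $\sim_\beta$-classes of $x$ and $y$ in $\mathfrak A/{\sim_\beta}$ is finite, and at limits $\sim_\lambda=\bigcup_{\beta<\lambda}\sim_\beta$; $\mathrm{FC}(\mathfrak A)$ is the least $\alpha$ with $\sim_\beta=\sim_\alpha$ for all $\beta\ge\alpha$. $\mathcal{VD}_0=\{\mathbf 0,\mathbf 1\}$; for $\alpha>0$, $\mathcal{VD}_\alpha$ consists of all finite, $\omega$-, $\omega^*$- and $\zeta$-sums of elements of $\bigcup_{\beta<\alpha}\mathcal{VD}_\beta$; for countable scattered $\mathfrak B$, $\mathrm{VD}_*(\mathfrak B)$ is the least $\beta$ such that $\mathfrak B$ is a finite sum of elements of $\mathcal{VD}_\beta$. *)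

From HB Require Import structures.
From mathcomp Require Import all_boot all_order all_algebra.
From Stdlib Require List ProofIrrelevance.
Set Implicit Arguments. Unset Strict Implicit. Unset Printing Implicit Defensive.
Import Order.TTheory GRing.Theory Num.Theory.

Inductive Ord : Type :=
| OZ : Ord
| OS : Ord -> Ord
| OL : (nat -> Ord) -> Ord.      (* OL f = sup_n f n *)

Inductive ord_le : Ord -> Ord -> Prop :=
| ole_Z b : ord_le OZ b
| ole_S a b : ord_lt a b -> ord_le (OS a) b
| ole_L f b : (forall n, ord_le (f n) b) -> ord_le (OL f) b
with ord_lt : Ord -> Ord -> Prop :=
| olt_S a b : ord_le a b -> ord_lt a (OS b)
| olt_L a f n : ord_lt a (f n) -> ord_lt a (OL f).

Record LinOrd : Type := {
  carrier :> Type;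
  rlt : carrier -> carrier -> Prop;
  rlt_irr : forall x, ~ rlt x x;
  rlt_trans : forall x y z, rlt x y -> rlt y z -> rlt x z;
  rlt_total : forall x y, rlt x y \/ x = y \/ rlt y x }.

Definition rle (A : LinOrd) (x y : A) : Prop := x = y \/ rlt x y.

Definition countableLO (A : LinOrd) : Prop :=
  exists f : A -> nat, forall x y, f x = f y -> x = y.

Definition subLO (A : LinOrd) (P : A -> Prop) : LinOrd.
Proof.
  refine {| carrier := {x : A | P x};
            rlt := fun u v => rlt (proj1_sig u) (proj1_sig v) |}.
  - intros [x Hx]; apply rlt_irr.
  - intros [x Hx] [y Hy] [z Hz]; apply rlt_trans.
  - intros [x Hx] [y Hy]; simpl.
    destruct (rlt_total x y) as [H|[H|H]]; [left; exact H| |right; right; exact H].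
    right; left; subst y; f_equal; apply ProofIrrelevance.proof_irrelevance.
Defined.

Definition intervalLO (A : LinOrd) (x y : A) : LinOrd :=
  subLO (fun z => rle x z /\ rle z y).

Definition scattered (A : LinOrd) : Prop :=
  ~ exists f : rat -> A, forall p q : rat, (p < q)%R -> rlt (f p) (f q).

Definition between (A : LinOrd) (x y z : A) : Prop :=
  (rle x z /\ rle z y) \/ (rle y z /\ rle z x).

(* sim A b x y  <->  x ~_b y.
   Successor: the closed interval between the ~_b-classes of x and y in A/~_b
   is finite, i.e. the points between x and y meet only finitely many
   ~_b-classes. *)
Fixpoint sim (A : LinOrd) (a : Ord) : A -> A -> Prop :=
  match a with
  | OZ => fun x y => x = y
  | OS b => fun x y => exists l : list A,
        forall z, between x y z -> exists w, List.In w l /\ sim b z w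
  | OL f => fun x y => exists n, sim (f n) x y
  end.

Definition stabilizes (A : LinOrd) (a : Ord) : Prop :=
  forall b, ord_le a b -> forall x y : A, sim b x y <-> sim a x y.

Definition isFC (A : LinOrd) (a : Ord) : Prop :=
  stabilizes A a /\ forall d, stabilizes A d -> ord_le a d.

Inductive SumKind : Type := KFin (n : nat) | KOmega | KOmegaStar | KZeta.

Definition idx (k : SumKind) : Type :=
  match k with
  | KFin n => 'I_n
  | KOmega => nat
  | KOmegaStar => nat
  | KZeta => int
  end.

Definition idx_lt (k : SumKind) : idx k -> idx k -> Prop :=
  match k as k0 return idx k0 -> idx k0 -> Prop with
  | KFin n => fun i j => (nat_of_ord i < nat_of_ord j)%N
  | KOmega => fun i j => (i < j)%N
  | KOmegaStar => fun i j => (j < i)%N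
  | KZeta => fun i j => (i < j)%R
  end.

Definition fiber (X : LinOrd) (I : Type) (g : X -> I) (i : I) : LinOrd :=
  subLO (fun x => g x = i).

Definition IsSum (k : SumKind) (X : LinOrd) (P : LinOrd -> Prop) : Prop :=
  exists g : X -> idx k,
    (forall x y, rlt x y -> g x = g y \/ idx_lt (g x) (g y)) /\
    (forall i, P (fiber g i)).

(* VD a X  <->  X belongs to VD_a (up to isomorphism) *)
Inductive VD : Ord -> LinOrd -> Prop :=
| VD_base a (X : LinOrd) :
    ord_le a OZ -> (forall x y : X, x = y) -> VD a X
| VD_sum a (X : LinOrd) (k : SumKind) (g : X -> idx k) :
    ord_lt OZ a ->
    (forall x y, rlt x y -> g x = g y \/ idx_lt (g x) (g y)) ->
    (forall i, exists b, ord_lt b a /\ VD b (fiber g i)) ->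
    VD a X.

Definition finsumVD (b : Ord) (B : LinOrd) : Prop :=
  exists n, IsSum (KFin n) B (VD b).

Definition isVDstar (B : LinOrd) (a : Ord) : Prop :=
  finsumVD a B /\ forall d, finsumVD d B -> ord_le a d.

From HB Require Import structures.
From mathcomp Require Import all_boot all_order all_algebra zify lra.
From Stdlib Require List ProofIrrelevance ClassicalEpsilon FinFun.
From Stdlib Require Import Classical.
Set Implicit Arguments. Unset Strict Implicit. Unset Printing Implicit Defensive.
Import Order.TTheory GRing.Theory Num.Theory.

(* Write x ~_b y for [sim A b x y] and call a linear order X "one ~_b-class"
   when any two of its points are ~_b-related.  The argument has three parts.

   1. Classes versus sums.  A linear order is one ~_a-class iff it lies in
      VD_a ([VD_one_class], [one_class_VD]).  The converse direction cuts X
      into a zeta-sum along a "level function" measured from a base point c: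
      for a = b+1 the level of z is the least number of ~_b-classes covering
      [c,z]; for a limit a = sup f the level of z is the least m with
      z ~_(f m) c.  If X is moreover bounded and one ~_(b+1)-class, the first
      level function takes finitely many values, so X is a finite sum of
      VD_b-orders ([finsumVD_of_bounded]).
   2. A ~_a-class is scattered, since between two points of a rational
      chain there are more pairwise ~_a-unrelated points than any finite
      cover by ~_a-classes could separate ([one_class_scattered]).
   3. If FC(A) > alpha, some x <= y satisfy x ~_(alpha+1) y but not
      x ~_alpha y ([FC_succ_witness]).  The interval [x,y] is then one
      ~_(alpha+1)-class that is not one ~_alpha-class; such an order has
      FC-rank alpha+1 and, being bounded, VD_*-rank alpha. *)

Lemma le_S_inv a b : ord_le (OS a) b -> ord_lt a b.
Proof. by move=> H; inversion H. Qed.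
Lemma le_L_inv f b : ord_le (OL f) b -> forall n, ord_le (f n) b.
Proof. by move=> H; inversion H. Qed.
Lemma lt_S_inv a b : ord_lt a (OS b) -> ord_le a b.
Proof. by move=> H; inversion H. Qed.
Lemma lt_L_inv a f : ord_lt a (OL f) -> exists n, ord_lt a (f n).
Proof. by move=> H; inversion H; eauto. Qed.
Lemma lt_Z_inv a : ~ ord_lt a OZ.
Proof. by move=> H; inversion H. Qed.

Lemma ord_trans_below c
  (T3 : forall a b, ord_le a b -> ord_lt b c -> ord_lt a c) :
  (forall b a, ord_lt a b -> ord_le b c -> ord_lt a c) /\
  (forall a b, ord_le a b -> ord_le b c -> ord_le a c).
Proof.
have T2 : forall b a, ord_lt a b -> ord_le b c -> ord_lt a c.
  elim=> [|b IHb|g IHg] a H1 H2.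
  - by case: (lt_Z_inv H1).
  - exact: T3 (lt_S_inv H1) (le_S_inv H2).
  - by case: (lt_L_inv H1) => n Hn; exact: IHg n a Hn (le_L_inv H2 n).
split=> //; elim=> [|a IHa|g IHg] b H1 H2; constructor.
- exact: T2 (le_S_inv H1) H2.
- by move=> n; exact: IHg n b (le_L_inv H1 n) H2.
Qed.

Lemma ord_trans_all c : forall a b,
  (ord_le a b -> ord_le b c -> ord_le a c) /\
  (ord_lt a b -> ord_le b c -> ord_lt a c) /\
  (ord_le a b -> ord_lt b c -> ord_lt a c).
Proof.
have close : forall c, (forall a b, ord_le a b -> ord_lt b c -> ord_lt a c) ->
    forall a b, (ord_le a b -> ord_le b c -> ord_le a c) /\
      (ord_lt a b -> ord_le b c -> ord_lt a c) /\
      (ord_le a b -> ord_lt b c -> ord_lt a c).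
  by move=> {}c T3 a b; case: (ord_trans_below T3) => T2 T1; split; [|split]; eauto.
elim: c => [|c IH|f IH]; apply: close => a b H1 H2.
- by case: (lt_Z_inv H2).
- by constructor; apply: (proj1 (IH a b)) H1 (lt_S_inv H2).
- case: (lt_L_inv H2) => n Hn; apply: olt_L.
  exact: (proj2 (proj2 (IH n a b))) H1 Hn.
Qed.

Lemma ole_trans a b c : ord_le a b -> ord_le b c -> ord_le a c.
Proof. exact: (proj1 (ord_trans_all c a b)). Qed.
Lemma olt_le_trans a b c : ord_lt a b -> ord_le b c -> ord_lt a c.
Proof. exact: (proj1 (proj2 (ord_trans_all c a b))). Qed.
Lemma ole_lt_trans a b c : ord_le a b -> ord_lt b c -> ord_lt a c.
Proof. exact: (proj2 (proj2 (ord_trans_all c a b))). Qed.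

Lemma ole_OL a f n : ord_le a (f n) -> ord_le a (OL f).
Proof.
elim: a f n => [|a IHa|g IHg] f n H; constructor.
- by apply: olt_L; exact: le_S_inv H.
- by move=> m; exact: IHg m f n (le_L_inv H m).
Qed.

Lemma ole_refl a : ord_le a a.
Proof.
elim: a => [|a IHa|g IHg]; do ! constructor => //.
by move=> n; apply: ole_OL (IHg n).
Qed.

Lemma ole_succ b : ord_le b (OS b).
Proof.
elim: b => [|b IHb|g IHg]; do ! constructor => //.
move=> n; apply: ole_trans (IHg n) _.
by do 2 constructor; apply: ole_OL (ole_refl (g n)).
Qed.

Lemma olt_le a b : ord_lt a b -> ord_le a b.
Proof.
elim: b a => [|b IHb|g IHg] a H.
- by case: (lt_Z_inv H).
- exact: ole_trans (lt_S_inv H) (ole_succ b).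
- by case: (lt_L_inv H) => n Hn; apply: ole_OL (IHg n a Hn).
Qed.

Lemma olt_irrefl a : ~ ord_lt a a.
Proof.
elim: a => [|a IHa|g IHg] H.
- exact: lt_Z_inv H.
- exact: IHa (le_S_inv (lt_S_inv H)).
- case: (lt_L_inv H) => n Hn; apply: (IHg n).
  exact: ole_lt_trans (ole_OL (ole_refl (g n))) Hn.
Qed.

Lemma lt0_or_le0 b : ord_lt OZ b \/ ord_le b OZ.
Proof.
elim: b => [|b _|g IHg]; first by right; constructor.
  by left; do 2 constructor.
case: (classic (exists n, ord_lt OZ (g n))) => [[n Hn]|Hn].
  by left; apply: olt_L Hn.
right; constructor=> n; case: (IHg n) => // H; case: Hn; eauto.
Qed.

Lemma ord_total_both a : forall b,
  (ord_le a b \/ ord_lt b a) /\ (ord_lt a b \/ ord_le b a).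
Proof.
have Hsup : forall s (g : nat -> Ord), (forall n, ord_lt s (g n) \/ ord_le (g n) s) ->
    ord_lt s (OL g) \/ ord_le (OL g) s.
  move=> s g IHg; case: (classic (exists n, ord_lt s (g n))) => [[n Hn]|Hn].
    by left; apply: olt_L Hn.
  right; constructor=> n; case: (IHg n) => // H; case: Hn; eauto.
elim: a => [|a IHa|f IHf] b.
- by split; [left; constructor|exact: lt0_or_le0].
- split.
    by case: (proj2 (IHa b)) => H; [left|right]; constructor.
  elim: b => [|b _|g IHg]; first by right; constructor.
    by case: (proj2 (IHa b)) => H; [left|right]; do 2 constructor.
  exact: Hsup.
- have Hle : forall b, ord_le (OL f) b \/ ord_lt b (OL f).
    move=> c; case: (classic (forall n, ord_le (f n) c)) => [H|/not_all_ex_not [n Hn]].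
      by left; constructor.
    by case: (proj1 (IHf n c)) => // H; right; apply: olt_L H.
  split; first exact: Hle.
  elim: b => [|b _|g IHg]; first by right; constructor.
    by case: (Hle b) => H; [left|right]; constructor.
  exact: Hsup.
Qed.

Lemma ord_total a b : ord_le a b \/ ord_lt b a.
Proof. exact: (proj1 (ord_total_both a b)). Qed.

Definition ord_join (a b : Ord) : Ord := OL (fun n => if n is 0 then a else b).

Lemma ord_join_l a b : ord_le a (ord_join a b).
Proof. exact: (@ole_OL a _ 0 (ole_refl a)). Qed.
Lemma ord_join_r a b : ord_le b (ord_join a b).
Proof. exact: (@ole_OL b _ 1 (ole_refl b)). Qed.

Section LinearOrder.
Variable A : LinOrd.
Implicit Types x y z t u v w : A.

Lemma rle_refl x : rle x x.
Proof. by left. Qed.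

Lemma rle_trans x y z : rle x y -> rle y z -> rle x z.
Proof.
by move=> [->|H1] [<-|H2]; [left|right|right|right; exact: rlt_trans H1 H2].
Qed.

Lemma rle_total x y : rle x y \/ rle y x.
Proof. by case: (rlt_total x y) => [H|[H|H]]; [left; right|left; left|right; right]. Qed.

Lemma rle_antisym x y : rle x y -> rle y x -> x = y.
Proof. by move=> [//|H1] [//|H2]; case: (rlt_irr (rlt_trans H1 H2)). Qed.

Lemma nlt_rle x y : ~ rlt x y -> rle y x.
Proof. by case: (rlt_total x y) => [H|[->|H]] Hn; [case: Hn|left|right]. Qed.

Lemma between_sym x y z : between x y z -> between y x z.
Proof. rewrite /between; tauto. Qed.

Lemma between_norm x y z : rle x y -> between x y z -> rle x z /\ rle z y.
Proof. by move=> Hxy [//|[H1 H2]]; split; [exact: rle_trans Hxy H1|exact: rle_trans H2 Hxy]. Qed.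

Lemma between_l x y : between x y x.
Proof. by case: (rle_total x y) => H; [left|right]; split; auto using rle_refl. Qed.

Lemma between_r x y : between x y y.
Proof. by case: (rle_total x y) => H; [left|right]; split; auto using rle_refl. Qed.

Lemma between_xx x z : between x x z -> z = x.
Proof. by move=> [[H1 H2]|[H1 H2]]; apply: rle_antisym. Qed.

Lemma between_sub x y u v t :
  between x y u -> between x y v -> between u v t -> between x y t.
Proof.
wlog Hxy : x y / rle x y.
  move=> W; case: (rle_total x y) => [|Hyx]; first exact: W.
  by move=> /between_sym Hu /between_sym Hv Ht; apply/between_sym; exact: W Hu Hv Ht.
move=> /(between_norm Hxy) [Hu1 Hu2] /(between_norm Hxy) [Hv1 Hv2] Ht.
by left; case: Ht => [[H1 H2]|[H1 H2]]; split; eauto using rle_trans.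
Qed.

Lemma between_split x y z t : between x z t -> between x y t \/ between y z t.
Proof.
case: (rle_total t y) => Hty [[H1 H2]|[H1 H2]];
  by [left; left|right; right|right; left|left; right].
Qed.

Lemma between_mid c u v t : between c u t -> between c v u -> between t v u.
Proof.
case: (rle_total c v) => Hcv Ht Hu.
- case: (between_norm Hcv Hu) => H1 H2.
  by case: (between_norm H1 Ht) => H3 H4; left.
- case: (between_norm Hcv (between_sym Hu)) => H1 H2.
  by case: (between_norm H2 (between_sym Ht)) => H3 H4; right.
Qed.

Lemma sim_refl b x : sim b x x.
Proof.
elim: b x => [|b IH|f IH] x //=; last by exists 0%N; exact: IH.
by exists (x :: nil) => z /between_xx ->; exists x; split; [left|exact: IH].
Qed.

Lemma sim_sym b x y : sim b x y -> sim b y x.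
Proof.
elim: b x y => [|b IH|f IH] x y /=; first by [].
- by move=> [l Hl]; exists l => z /between_sym; exact: Hl.
- by move=> [n Hn]; exists n; exact: IH.
Qed.

Lemma sim_conv b x y u v : sim b x y -> between x y u -> between x y v -> sim b u v.
Proof.
elim: b x y u v => [|b IH|f IH] x y u v /=.
- by move=> -> /between_xx -> /between_xx ->.
- by move=> [l Hl] Hu Hv; exists l => z Hz; exact: Hl (between_sub Hu Hv Hz).
- by move=> [n Hn] Hu Hv; exists n; exact: IH Hn Hu Hv.
Qed.

Lemma sim_mono_S a b x y : (forall x y, sim a x y -> sim b x y) ->
  sim (OS a) x y -> sim (OS b) x y.
Proof.
move=> Hab [l Hl]; exists l => z /Hl [w [Hw Hs]]; exists w; split; auto.
Qed.

Scheme le_mut := Induction for ord_le Sort Prop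
with lt_mut := Induction for ord_lt Sort Prop.

Lemma sim_le a b x y : ord_le a b -> sim a x y -> sim b x y.
Proof.
move=> H; move: x y; elim H using le_mut with
  (P0 := fun a b _ => forall x y : A, sim (OS a) x y -> sim b x y).
- by move=> c x y /= ->; exact: sim_refl.
- by move=> a' c _ IH x y Hs; exact: IH.
- by move=> f c _ IH x y [n Hn]; exact: IH Hn.
- by move=> a' c _ IH x y Hs; exact: sim_mono_S IH Hs.
- by move=> a' f n _ IH x y Hs; exists n; exact: IH.
Qed.

(* Transitivity: at successors the covers concatenate; at limits both pairs
   are related at the larger of the two stages. *)
Lemma sim_trans b x y z : sim b x y -> sim b y z -> sim b x z.
Proof.
elim: b x y z => [|b IH|f IH] x y z /=.
- by move=> -> ->.
- move=> [l1 H1] [l2 H2]; exists (l1 ++ l2)%list => t /(between_split y) [H|H].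
    by case: (H1 t H) => w [Hw Hs]; exists w; split; [apply: List.in_or_app; left|].
  by case: (H2 t H) => w [Hw Hs]; exists w; split; [apply: List.in_or_app; right|].
- move=> [n Hn] [m Hm]; case: (ord_total (f n) (f m)) => H.
    by exists m; apply: IH (sim_le H Hn) Hm.
  by exists n; apply: IH Hn (sim_le (olt_le H) Hm).
Qed.

End LinearOrder.

Definition one_class (X : LinOrd) (b : Ord) : Prop := forall u v : X, sim b u v.

Lemma one_class_le (X : LinOrd) a b : ord_le a b -> one_class X a -> one_class X b.
Proof. by move=> Hab H u v; exact: sim_le Hab (H u v). Qed.

Lemma list_choice (T U : Type) (Q : T -> U -> Prop) (L : list U) :
  exists ws : list T, forall u, List.In u L -> (exists t, Q t u) ->
    exists w, List.In w ws /\ Q w u.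
Proof.
elim: L => [|u0 L [ws Hws]]; first by exists nil.
case: (classic (exists t, Q t u0)) => [[t Ht]|Hn].
- exists (t :: ws) => u [<-|Hu] Hex; first by exists t; split; [left|].
  by case: (Hws u Hu Hex) => w [Hw Hq]; exists w; split; [right|].
- by exists ws => u [<-|Hu] Hex; [case: Hn|exact: Hws].
Qed.

Section Suborder.
Variables (A : LinOrd) (P : A -> Prop).

Definition convex : Prop := forall x y z : A, P x -> P y -> between x y z -> P z.

Lemma sig_eq (u v : subLO P) : proj1_sig u = proj1_sig v -> u = v.
Proof.
case: u v => [x Hx] [y Hy] /= Exy; subst y; congr exist.
exact: ProofIrrelevance.proof_irrelevance.
Qed.

Lemma rle_sub (u v : subLO P) : rle u v <-> rle (proj1_sig u) (proj1_sig v).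
Proof.
rewrite /rle /=; split; first by move=> [->|H]; [left|right].
by move=> [/sig_eq H|H]; [left|right].
Qed.

Lemma between_sub_iff (u v t : subLO P) :
  between u v t <-> between (proj1_sig u) (proj1_sig v) (proj1_sig t).
Proof. by rewrite /between !rle_sub. Qed.

Lemma sim_sub_down b (u v : subLO P) :
  sim b (proj1_sig u) (proj1_sig v) -> sim b u v.
Proof.
elim: b u v => [|b IH|f IH] u v /=.
- exact: sig_eq.
- move=> [l Hl].
  case: (list_choice (fun (t : subLO P) w => sim b (proj1_sig t) w) l) => l' Hl'.
  exists l' => z /between_sub_iff /Hl [w [Hw Hs]].
  case: (Hl' w Hw (ex_intro _ z Hs)) => t' [Ht' Hs']; exists t'; split=> //.
  by apply: IH; exact: sim_trans Hs (sim_sym Hs').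
- by move=> [n Hn]; exists n; exact: IH.
Qed.

Lemma sim_sub_up (Hc : convex) b (u v : subLO P) :
  sim b u v -> sim b (proj1_sig u) (proj1_sig v).
Proof.
elim: b u v => [|b IH|f IH] u v /=.
- by move=> ->.
- move=> [l Hl]; exists (List.map (@proj1_sig _ _) l) => z Hz.
  pose z' := exist P z (Hc _ _ _ (proj2_sig u) (proj2_sig v) Hz) : subLO P.
  case: (Hl z' (proj2 (between_sub_iff u v z') Hz)) => w [Hw Hs].
  by exists (proj1_sig w); split; [apply: List.in_map|exact: IH Hs].
- by move=> [n Hn]; exists n; exact: IH.
Qed.

End Suborder.

(* Sums.  Every index set is embedded order-preservingly into the integers,
   so that finitely many indices lie between any two. *)
Definition rank (k : SumKind) : idx k -> int :=
  match k as k0 return idx k0 -> int with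
  | KFin n => fun i => Posz (nat_of_ord i)
  | KOmega => fun i => Posz i
  | KOmegaStar => fun i => (- Posz i)%R
  | KZeta => fun i => i
  end.

Lemma rank_lt k (i j : idx k) : idx_lt i j -> (rank i < rank j)%R.
Proof. by case: k i j => /= *; lia. Qed.

Lemma rank_inj k (i j : idx k) : rank i = rank j -> i = j.
Proof. by case: k i j => /= [n i j|i j|i j|i j] H; try lia; apply: val_inj => /=; lia. Qed.

Definition mono (X : LinOrd) k (g : X -> idx k) : Prop :=
  forall x y, rlt x y -> g x = g y \/ idx_lt (g x) (g y).

Lemma mono_rle (X : LinOrd) k (g : X -> idx k) (Hg : mono g) x y :
  rle x y -> (rank (g x) <= rank (g y))%R.
Proof. by move=> [->|/Hg [->|/rank_lt]]; lia. Qed.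

Lemma fiber_convex (X : LinOrd) k (g : X -> idx k) (Hg : mono g) i :
  convex (fun x => g x = i).
Proof.
move=> a b t Ha Hb Ht; subst i; apply: rank_inj.
by case: Ht => [[H1 H2]|[H1 H2]]; move: (mono_rle Hg H1) (mono_rle Hg H2); rewrite Hb; lia.
Qed.

Lemma fiber_eq (X : LinOrd) k (g : X -> idx k) i (s t : fiber g i) :
  g (proj1_sig s) = g (proj1_sig t).
Proof. by rewrite (proj2_sig s) (proj2_sig t). Qed.

Definition int_between (a b : int) : list int :=
  List.map (fun k : nat => (Num.min a b + Posz k)%R) (List.seq 0 (absz (b - a)).+1).

Lemma int_between_in a b t :
  (Num.min a b <= t)%R -> (t <= Num.max a b)%R -> List.In t (int_between a b).
Proof.
move=> H1 H2; apply/List.in_map_iff; exists (absz (t - Num.min a b)).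
by split; [|apply/List.in_seq]; lia.
Qed.

Lemma cover_in (X : LinOrd) k (g : X -> idx k) (Hg : mono g) u v z :
  between u v z -> List.In (rank (g z)) (int_between (rank (g u)) (rank (g v))).
Proof.
by move=> [[/(mono_rle Hg) H1 /(mono_rle Hg) H2]|[/(mono_rle Hg) H1 /(mono_rle Hg) H2]];
  apply: int_between_in; lia.
Qed.

Lemma sum_sim (X : LinOrd) (I : Type) (g : X -> I) (u v : X) (L : list I) (e : Ord) :
  (forall z, between u v z -> List.In (g z) L) ->
  (forall s t, List.In (g s) L -> g s = g t -> sim e s t) -> sim (OS e) u v.
Proof.
move=> Hcov Hfib; case: (list_choice (fun s i => g s = i) L) => ws Hws.
exists ws => z Hz.
case: (Hws (g z) (Hcov z Hz) (ex_intro _ z erefl)) => w [Hw Hgw].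
by exists w; split=> //; apply: Hfib; [exact: Hcov|rewrite Hgw].
Qed.

Lemma list_bound (T : Type) (Q : T -> Ord -> Prop)
  (Qmono : forall t b e, ord_le b e -> Q t b -> Q t e) a (Ha : ord_lt OZ a)
  (HQ : forall t, exists b, ord_lt b a /\ Q t b) (L : list T) :
  exists e, ord_lt e a /\ forall t, List.In t L -> Q t e.
Proof.
elim: L => [|t L [e [He HL]]]; first by exists OZ.
case: (HQ t) => b [Hb Hbt]; case: (ord_total e b) => Heb.
- by exists b; split=> // s [<-|Hs]; [|apply: Qmono Heb (HL s Hs)].
- by exists e; split=> // s [<-|Hs]; [apply: Qmono (olt_le Heb) Hbt|apply: HL].
Qed.

Lemma sum_one_class (X : LinOrd) k (g : X -> idx k) a (Ha : ord_lt OZ a)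
  (Hg : mono g) (Hf : forall i, exists b, ord_lt b a /\ one_class (fiber g i) b) :
  one_class X a.
Proof.
pose Q r e := forall i : idx k, rank i = r -> one_class (fiber g i) e.
have HQ : forall r, exists b, ord_lt b a /\ Q r b.
  move=> r; case: (classic (exists i : idx k, rank i = r)) => [[i <-]|Hn].
    by case: (Hf i) => b [Hb Hcl]; exists b; split=> // j /rank_inj ->.
  by exists OZ; split=> // i Hi; case: Hn; exists i.
move=> u v; set L := int_between (rank (g u)) (rank (g v)).
have Qmono : forall r b e, ord_le b e -> Q r b -> Q r e.
  by move=> r b e Hbe HQr i Hi; apply: one_class_le Hbe (HQr i Hi).
case: (list_bound Qmono Ha HQ L) => e [He HL].
apply: (sim_le (ole_S He)).
apply: (@sum_sim X int (fun z => rank (g z)) u v L e); first by move=> z Hz; exact: (cover_in Hg Hz).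
move=> s t Hin /rank_inj Est.
pose s' := exist (fun x => g x = g s) s erefl : fiber g (g s).
pose t' := exist (fun x => g x = g s) t (esym Est) : fiber g (g s).
exact: (sim_sub_up (fiber_convex Hg (i := g s)) (HL _ Hin (g s) erefl s' t')).
Qed.

Fixpoint VD_one_class a X (H : VD a X) {struct H} : one_class X a.
Proof.
case: H => [{}a {}X _ Hsub|{}a {}X k g Ha Hg Hf].
- by move=> u v; rewrite (Hsub u v); exact: sim_refl.
- apply: (sum_one_class Ha Hg) => i.
  by case: (Hf i) => b [Hb Hv]; exists b; split; [|exact: VD_one_class _ _ Hv].
Qed.

Lemma finsum_one_class d (X : LinOrd) : finsumVD d X -> one_class X (OS d).
Proof.
move=> [n [g [Hg Hf]]]; apply: (sum_one_class (k := KFin n) (g := g)) => //.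
  by do 2 constructor.
by move=> i; exists d; split; [constructor; exact: ole_refl|exact: VD_one_class].
Qed.

Definition pb (P : Prop) : bool :=
  if ClassicalEpsilon.excluded_middle_informative P then true else false.

Lemma pbP (P : Prop) : pb P = true <-> P.
Proof. by rewrite /pb; case: ClassicalEpsilon.excluded_middle_informative. Qed.

Lemma pbF (P : Prop) : pb P = false -> ~ P.
Proof. by move=> E /pbP; rewrite E. Qed.

Lemma exists_pb (P : nat -> Prop) : (exists n, P n) -> exists n, pb (P n).
Proof. by move=> [n /pbP Hn]; exists n. Qed.

Definition least (P : nat -> Prop) : nat :=
  match ClassicalEpsilon.excluded_middle_informative (exists n, P n) with
  | left H => ex_minn (exists_pb H)
  | right _ => 0
  end.

Lemma least_spec P : (exists n, P n) -> P (least P).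
Proof.
rewrite /least => H; case: ClassicalEpsilon.excluded_middle_informative => // -[n Hn].
by case: ex_minnP => m /pbP.
Qed.

Lemma least_min P n : P n -> (least P <= n)%N.
Proof.
rewrite /least => Hn; case: ClassicalEpsilon.excluded_middle_informative => [[m Hm]|[]].
  by case: ex_minnP => k _; apply; apply/pbP.
by exists n.
Qed.

Definition level_function (X : LinOrd) (c : X) (H : X -> nat) (B : nat -> Ord) : Prop :=
  (forall z z', between c z' z -> (H z <= H z')%N) /\
  (forall s t, H s = H t -> between c t s -> sim (B (H s)) s t).

(* Splitting X at c and at the levels yields a zeta-sum whose fibres are
   one-sided level sets. *)
Lemma level_zeta_map (X : LinOrd) (c : X) (H : X -> nat)
  (Hm : forall z z', between c z' z -> (H z <= H z')%N) :
  exists g : X -> idx KZeta, mono g /\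
    forall s t, g s = g t -> H s = H t /\ (between c t s \/ between c s t).
Proof.
exists (fun z => if pb (rlt z c) then Negz (H z) else Posz (H z)); split.
- move=> x y Hxy.
  case Ex: (pb (rlt x c)); case Ey: (pb (rlt y c)).
  + move/pbP: Ex => Ex; move/pbP: Ey => Ey.
    have : (H y <= H x)%N by apply: Hm; right; split; right.
    by case: (eqVneq (H x) (H y)) => [->|]; [left|right => /=; lia].
  + by right => /=; lia.
  + by move/pbP: Ey => Ey; case: (pbF Ex (rlt_trans Hxy Ey)).
  + move/pbF/nlt_rle: Ex => Ex.
    have : (H x <= H y)%N by apply: Hm; left; split; [|right].
    by case: (eqVneq (H x) (H y)) => [->|]; [left|right => /=; lia].
- move=> s t; case Es: (pb (rlt s c)); case Et: (pb (rlt t c)) => /= E; try lia.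
  + move/pbP: Es => Es; move/pbP: Et => Et; split; first lia.
    by case: (rle_total s t) => H1; [right|left]; right; split=> //; right.
  + move/pbF/nlt_rle: Es => Es; move/pbF/nlt_rle: Et => Et; split; first lia.
    by case: (rle_total s t) => H1; [left|right]; left.
Qed.

Lemma VD_empty_sum a (X : LinOrd) : ord_lt OZ a -> ~ inhabited X -> VD a X.
Proof.
move=> Ha Hne; apply: (VD_sum (k := KZeta) (g := fun _ => 0%R)) => //.
  by move=> *; left.
move=> i; exists OZ; split=> //; apply: VD_base; first by constructor.
by move=> u; case: Hne; constructor; exact: (proj1_sig u).
Qed.

Lemma VD_of_levels (X : LinOrd) (a : Ord) (c : X) (H : X -> nat) (B : nat -> Ord) :
  ord_lt OZ a -> (forall n, ord_lt (B n) a) ->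
  (forall n (Y : LinOrd), one_class Y (B n) -> VD (B n) Y) ->
  level_function c H B -> VD a X.
Proof.
move=> Ha HB IHB [Hm Hlev]; case: (level_zeta_map Hm) => g [Hg Hfib].
apply: (VD_sum (k := KZeta) (g := g)) => // i.
case: (classic (inhabited (fiber g i))) => [[s0]|Hne].
- exists (B (H (proj1_sig s0))); split=> //; apply: IHB => s t; apply: sim_sub_down.
  case: (Hfib _ _ (fiber_eq s s0)) => <- _.
  case: (Hfib _ _ (fiber_eq s t)) => Est [Hb|Hb]; first exact: Hlev.
  by apply: sim_sym; rewrite Est; exact: Hlev.
- exists (B 0); split=> //; apply: IHB => u; case: Hne; exact: inhabits.
Qed.

Section CoverLevel.
Variables (X : LinOrd) (b : Ord) (c : X).

Definition covers (z : X) (n : nat) : Prop :=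
  exists l : list X, length l = n /\
    forall t, between c z t -> exists w, List.In w l /\ sim b t w.

Definition cover_level (z : X) : nat := least (covers z).

Lemma cover_level_mono z z' : (exists n, covers z' n) -> between c z' z ->
  (cover_level z <= cover_level z')%N.
Proof.
move=> Hex Hb; apply: least_min; case: (least_spec Hex) => l [Hlen Hl].
by exists l; split=> // t Ht; apply: Hl (between_sub (between_l c z') Hb Ht).
Qed.

(* Points of equal level on the same side of c are ~_b-related: otherwise
   the ~_b-class of v could be dropped from a minimal cover of [c,v], which
   would still cover [c,u]. *)
Lemma cover_level_class (Hall : forall z, exists n, covers z n) u v :
  between c v u -> cover_level u = cover_level v -> sim b u v.
Proof.
move=> Hb Heq; apply: NNPP => Hn; case: (least_spec (Hall v)) => l [Hlen Hl].
pose keep w := ~~ pb (sim b w v).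
have Hcov : covers u (length (List.filter keep l)).
  exists (List.filter keep l); split=> // t Ht.
  case: (Hl t (between_sub (between_l c v) Hb Ht)) => w [Hw Hs].
  exists w; split=> //; apply/List.filter_In; split=> //; rewrite /keep.
  case E: (pb (sim b w v)) => //; case: Hn; move/pbP: E => Ewv.
  exact: sim_conv (sim_trans Hs Ewv) (between_mid Ht Hb) (between_r t v).
have Hdrop : (length (List.filter keep l) < length l)%N.
  case: (Hl v (between_r c v)) => w [Hw Hs].
  have Hkw : keep w = false by rewrite /keep (proj2 (pbP _) (sim_sym Hs)).
  have := List.filter_length_le keep l.
  suff : length (List.filter keep l) <> length l by lia.
  by move/List.filter_length_forallb/List.forallb_forall/(_ w Hw); rewrite Hkw.
by move: (least_min Hcov); rewrite /cover_level in Heq; lia.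
Qed.

End CoverLevel.

Lemma succ_level_function (X : LinOrd) (b : Ord) (c : X) :
  one_class X (OS b) -> level_function c (cover_level b c) (fun _ => b).
Proof.
move=> Hcls.
have Hall : forall z, exists n, covers b c z n.
  by move=> z; case: (Hcls c z) => l Hl; exists (length l), l.
split=> [z z' Hb|s t Heq Hb] /=; first exact: cover_level_mono (Hall z') Hb.
exact (cover_level_class Hall Hb Heq).
Qed.

Definition limit_level (X : LinOrd) (f : nat -> Ord) (c z : X) : nat :=
  least (fun m => sim (f m) z c).

Lemma limit_level_function (X : LinOrd) (f : nat -> Ord) (c : X) :
  one_class X (OL f) -> level_function c (limit_level f c) f.
Proof.
move=> Hcls; have Hall : forall z, exists m, sim (f m) z c by move=> z; exact: Hcls.
split=> [z z' Hb|s t Heq _].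
- apply: least_min.
  exact: sim_conv (least_spec (Hall z')) (between_sym Hb) (between_r z' c).
- have Ht := least_spec (Hall t); rewrite -/(limit_level f c t) -Heq in Ht.
  exact: sim_trans (least_spec (Hall s)) (sim_sym Ht).
Qed.

Lemma VD_equiv a a' (X : LinOrd) : VD a X -> ord_le a a' -> ord_le a' a -> VD a' X.
Proof.
case=> [{}a {}X Ha Hsub|{}a {}X k g Ha Hg Hf] Haa' Ha'a.
- by apply: VD_base => //; exact: ole_trans Ha'a Ha.
- apply: (VD_sum (g := g)) => //; first exact: olt_le_trans Ha Haa'.
  by move=> i; case: (Hf i) => b [Hb Hv]; exists b; split=> //; exact: olt_le_trans Hb Haa'.
Qed.

Lemma one_class_VD : forall a (X : LinOrd), one_class X a -> VD a X.
Proof.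
elim=> [|b IH|f IH] X Hcls; first by apply: VD_base; [constructor|exact: Hcls].
- have H0 : ord_lt OZ (OS b) by do 2 constructor.
  case: (classic (inhabited X)) => [[c]|]; last exact: VD_empty_sum.
  apply: (VD_of_levels H0 _ (fun _ => IH) (succ_level_function c Hcls)) => _.
  by constructor; exact: ole_refl.
- case: (classic (exists m, ord_le (OL f) (f m))) => [[m Hm]|Hnm].
    apply: VD_equiv (IH m X (one_class_le Hm Hcls)) (ole_OL (ole_refl _)) Hm.
  have Hlt : forall n, ord_lt (f n) (OL f).
    by move=> n; case: (ord_total (OL f) (f n)) => // H; case: Hnm; exists n.
  have H0 : ord_lt OZ (OL f) := ole_lt_trans (ole_Z _) (Hlt 0%N).
  case: (classic (inhabited X)) => [[c]|]; last exact: VD_empty_sum.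
  exact: VD_of_levels H0 Hlt IH (limit_level_function c Hcls).
Qed.

Definition bounded (X : LinOrd) : Prop := exists c d : X, forall z, rle c z /\ rle z d.

(* A bounded ~_(b+1)-class is covered by finitely many ~_b-classes, so the
   successor level takes finitely many values and cuts X into a finite sum
   of members of VD_b. *)
Lemma finsumVD_of_bounded (X : LinOrd) (b : Ord) :
  bounded X -> one_class X (OS b) -> finsumVD b X.
Proof.
move=> [c [d Hcd]] Hcls; case: (Hcls c d) => l0 Hl0; set N := length l0.
have Hall : forall z, covers b c z N.
  by move=> z; exists l0; split=> // t _; apply: Hl0; left.
have HN : forall z, (cover_level b c z < N.+1)%N.
  by move=> z; have := least_min (Hall z); rewrite /cover_level; lia.
case: (succ_level_function c Hcls) => Hm Hlev.
exists N.+1, (fun z => inord (cover_level b c z)); split.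
- move=> x y Hxy; have Hle := Hm x y (or_introl (conj (proj1 (Hcd x)) (or_intror Hxy))).
  case: (eqVneq (cover_level b c x) (cover_level b c y)) => [->|Hne]; first by left.
  by right => /=; rewrite !inordK ?HN //; lia.
- move=> i; apply: one_class_VD => s t; apply: sim_sub_down.
  have E : cover_level b c (proj1_sig s) = cover_level b c (proj1_sig t).
    by have := f_equal (@nat_of_ord _) (fiber_eq s t); rewrite /= !inordK ?HN.
  case: (rle_total (proj1_sig s) (proj1_sig t)) => H1.
    exact: Hlev E (or_introl (conj (proj1 (Hcd _)) H1)).
  by apply: sim_sym; exact: Hlev (esym E) (or_introl (conj (proj1 (Hcd _)) H1)).
Qed.

Lemma class_count_le (T : Type) (R : T -> T -> Prop)
  (Rsym : forall s t, R s t -> R t s) (Rtrans : forall s t u, R s t -> R t u -> R s u)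
  (l S : list T) :
  List.NoDup S -> (forall s t, List.In s S -> List.In t S -> R s t -> s = t) ->
  (forall s, List.In s S -> exists w, List.In w l /\ R s w) ->
  (length S <= length l)%N.
Proof.
move=> HS Hsep Hcov.
suff [ws [Hlen [Hnd Hinc]]] : exists ws : list T,
    length ws = length S /\ List.NoDup ws /\ List.incl ws l.
  by rewrite -Hlen; have := List.NoDup_incl_length Hnd Hinc; lia.
suff : forall S', List.incl S' S -> List.NoDup S' -> exists ws : list T,
    [/\ length ws = length S', List.NoDup ws, List.incl ws l &
        forall w, List.In w ws -> exists s, List.In s S' /\ R s w].
  by move=> /(_ S (List.incl_refl S) HS) [ws [? ? ? _]]; exists ws.
elim=> [|s S' IH] Hsub Hnd; first by exists nil; split=> //; constructor.
case/List.NoDup_cons_iff: Hnd => Hs Hnd.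
case: (IH (List.incl_cons_inv Hsub).2 Hnd) => ws [Hlen Hndw Hinc Hws].
case: (Hcov s (Hsub s (or_introl erefl))) => w [Hw Hsw].
exists (w :: ws); split=> /=; first by rewrite Hlen.
- constructor=> // /Hws [s' [Hs' Hs'w]]; apply: Hs.
  suff -> : s = s' by [].
  by apply: Hsep; [exact: Hsub (or_introl erefl)|exact: Hsub (or_intror Hs')|exact: Rtrans Hsw (Rsym _ _ Hs'w)].
- by move=> w' [<-|/Hinc].
- by move=> w' [<-|/Hws [s' [Hs' Hs'w]]]; [exists s; split; [left|]|exists s'; split; [right|]].
Qed.

Lemma many_rats (p q : rat) : (p < q)%R -> forall n, exists S : list rat,
  length S = n /\ List.NoDup S /\ forall r, List.In r S -> (p <= r <= q)%R.
Proof.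
move=> Hpq n.
suff [S [m [Hlen [Hnd [Hpm [Hmq HS]]]]]] : exists (S : list rat) (m : rat),
    length S = n /\ List.NoDup S /\ (p < m)%R /\ (m <= q)%R /\
    forall r, List.In r S -> (m <= r <= q)%R.
  exists S; split; [exact: Hlen|split; [exact: Hnd|]] => r /HS /andP [H1 H2].
  by apply/andP; split=> //; lra.
elim: n => [|n [S [m [Hlen [Hnd [Hpm [Hmq HS]]]]]]].
  by exists nil, q; split; [|split; [constructor|split; [|split; [lra|]]]].
exists (((p + m) / 2)%R :: S), ((p + m) / 2)%R; split; first by rewrite /= Hlen.
split; first by constructor=> // /HS /andP [H1 _]; lra.
do 2 (split; first lra); move=> r [<-|/HS /andP [H1 H2]]; apply/andP; split; lra.
Qed.

Lemma rat_chain_unrelated (X : LinOrd) (f : rat -> X)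
  (Hf : forall p q : rat, (p < q)%R -> rlt (f p) (f q)) :
  forall a p q, (p < q)%R -> ~ sim a (f p) (f q).
Proof.
have Hfle : forall p q : rat, (p <= q)%R -> rle (f p) (f q).
  by move=> p q; rewrite le_eqVlt => /orP [/eqP ->|/Hf]; [left|right].
have Hinj : FinFun.Injective f.
  by move=> p q E; case: (ltgtP p q) => // /Hf; rewrite E => /rlt_irr.
elim=> [|a IH|h IH] p q Hpq /=.
- by move=> E; move: (Hf _ _ Hpq); rewrite E => /rlt_irr.
- move=> [l Hl]; case: (many_rats Hpq (length l).+1) => S [HlenS [HndS HS]].
  suff : (length (List.map f S) <= length l)%N by rewrite List.length_map HlenS; lia.
  apply: (class_count_le (@sim_sym X a) (@sim_trans X a)).
  + exact: FinFun.Injective_map_NoDup.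
  + move=> _ _ /List.in_map_iff [r [<- _]] /List.in_map_iff [r' [<- _]] Hrr'.
    case: (ltgtP r r') => [/IH Hn|/IH Hn|-> //]; first by case: Hn.
    by case: Hn; apply: sim_sym.
  + move=> _ /List.in_map_iff [r [<- /HS /andP [H1 H2]]]; apply: Hl.
    by left; split; apply: Hfle.
- by move=> [n Hn]; exact: IH n p q Hpq Hn.
Qed.

Lemma one_class_scattered (X : LinOrd) a : one_class X a -> scattered X.
Proof. by move=> Hcls [f Hf]; exact: rat_chain_unrelated Hf a 0%R 1%R ltr01 (Hcls _ _). Qed.

Lemma isFC_of_one_class (X : LinOrd) a :
  one_class X (OS a) -> (exists u v : X, ~ sim a u v) -> isFC X (OS a).
Proof.
move=> Hcls [u [v Huv]]; split.
  by move=> b Hb s t; split=> H; [exact: Hcls|exact: sim_le Hb H].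
move=> d Hd.
have Hsd : sim d u v.
  by apply/(Hd _ (ord_join_l d (OS a))); exact: sim_le (ord_join_r d (OS a)) (Hcls u v).
case: (ord_total d a) => [Hda|Had]; last exact: ole_S.
by case: Huv; exact: sim_le Hda Hsd.
Qed.

Lemma isVDstar_of_one_class (X : LinOrd) a : bounded X ->
  one_class X (OS a) -> (exists u v : X, ~ sim a u v) -> isVDstar X a.
Proof.
move=> Hbd Hcls [u [v Huv]]; split; first exact: finsumVD_of_bounded.
move=> d Hd; case: (ord_total a d) => // Hda.
by case: Huv; exact: sim_le (ole_S Hda) (finsum_one_class Hd u v).
Qed.

Lemma stabilizes_of_succ (A : LinOrd) a :
  (forall x y : A, sim (OS a) x y -> sim a x y) -> stabilizes A a.
Proof.
move=> Hsucc.
have Hall : forall b (x y : A), sim b x y -> sim a x y.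
  elim=> [|b IH|f IH] x y /=.
  - by move=> ->; exact: sim_refl.
  - by move=> Hs; apply: Hsucc; exact: sim_mono_S IH Hs.
  - by move=> [n Hn]; exact: IH Hn.
by move=> b Hb x y; split; [exact: Hall|exact: sim_le Hb].
Qed.

Lemma FC_succ_witness (A : LinOrd) g alpha : isFC A g -> ord_lt alpha g ->
  exists x y : A, rle x y /\ sim (OS alpha) x y /\ ~ sim alpha x y.
Proof.
move=> [_ Hmin] Hlt; apply: NNPP => Hno.
suff Hstab : stabilizes A alpha by exact: olt_irrefl (olt_le_trans Hlt (Hmin _ Hstab)).
apply: stabilizes_of_succ => x y Hs; apply: NNPP => Hn; apply: Hno.
case: (rle_total x y) => Hxy; first by exists x, y.
by exists y, x; split; [|split; [exact: sim_sym|move/sim_sym]].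
Qed.

Section Interval.
Variables (A : LinOrd) (x y : A).
Hypothesis Hxy : rle x y.

Lemma interval_bounded : bounded (intervalLO x y).
Proof.
exists (exist _ x (conj (rle_refl x) Hxy)), (exist _ y (conj Hxy (rle_refl y))).
by move=> [z [Hz1 Hz2]]; split; apply/rle_sub.
Qed.

Lemma interval_one_class a : sim a x y -> one_class (intervalLO x y) a.
Proof.
by move=> Hs [u Hu] [v Hv]; apply: sim_sub_down => /=; apply: (sim_conv Hs); left.
Qed.

Lemma interval_not_one_class a : ~ sim a x y ->
  exists u v : intervalLO x y, ~ sim a u v.
Proof.
move=> Hn; exists (exist _ x (conj (rle_refl x) Hxy)), (exist _ y (conj Hxy (rle_refl y))).
move=> /(sim_sub_up _) H; apply: Hn; apply: H => a' b' t [Ha1 Ha2] [Hb1 Hb2] Ht.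
exact: between_norm Hxy (between_sub (or_introl (conj Ha1 Ha2)) (or_introl (conj Hb1 Hb2)) Ht).
Qed.

End Interval.

Theorem lemma4p15 (A : LinOrd) (alpha : Ord) :
  countableLO A ->
  (exists g, isFC A g /\ ord_lt alpha g) ->
  (exists x y : A, rle x y /\ scattered (intervalLO x y) /\
                   isFC (intervalLO x y) (OS alpha)) /\
  (exists x y : A, rle x y /\ scattered (intervalLO x y) /\
                   isVDstar (intervalLO x y) alpha).
Proof.
move=> _ [g [HFC Hlt]].
case: (FC_succ_witness HFC Hlt) => x [y [Hxy [Hs Hn]]].
have Hcls := interval_one_class Hs.
have Hsplit := interval_not_one_class Hxy Hn.
have Hscat := one_class_scattered Hcls.
split; exists x, y; do 2 (split=> //).
- exact: isFC_of_one_class Hcls Hsplit.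
- exact: isVDstar_of_one_class (interval_bounded Hxy) Hcls Hsplit.
Qed.
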